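(* Let $X,Y$ be arbitrary Archimedean vector lattices and let $T:X\to Y$ be a d-isomorphism. Then $T^{-1}$ satisfies condition $(\beta)$.
   Context: All vector lattices are Archimedean. For a subset $A$ of a vector lattice $X$, $A^d=\{x\in X: |x|\wedge|a|=0 \text{ for all } a\in A\}$ and $A^{dd}=(A^d)^d$. For $a,b\in X$ we write $a\lhd b$ if $\{a\}^{dd}\subseteq\{b\}^{dd}$. A linear operator $S$ satisfies condition $(\beta)$ if $Sa\lhd Sb$ whenever $a\lhd b$. A linear operator is disjointness preserving if it maps disjoint elements to disjoint elements. A linear bijection $T:X\to Y$ is a d-isomorphism if both $T$ and $T^{-1}$ are disjointness preserving. *)

From HB Require Import structures.
From mathcomp Require Import all_boot all_order all_algebra.
From mathcomp Require Import reals.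
Set Implicit Arguments. Unset Strict Implicit. Unset Printing Implicit Defensive.
Import Order.TTheory GRing.Theory Num.Theory.
Local Open Scope ring_scope.

Record vector_lattice (R : realType) := VectorLattice {
  vl_car :> lmodType R;
  vl_le : vl_car -> vl_car -> Prop;
  vl_join : vl_car -> vl_car -> vl_car;
  vl_le_refl : forall x, vl_le x x;
  vl_le_antisym : forall x y, vl_le x y -> vl_le y x -> x = y;
  vl_le_trans : forall x y z, vl_le x y -> vl_le y z -> vl_le x z;
  vl_le_add : forall x y z, vl_le x y -> vl_le (x + z) (y + z);
  vl_le_scale : forall (a : R) x y, 0 <= a -> vl_le x y -> vl_le (a *: x) (a *: y);
  vl_join_ubl : forall x y, vl_le x (vl_join x y);
  vl_join_ubr : forall x y, vl_le y (vl_join x y);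
  vl_join_least : forall x y z, vl_le x z -> vl_le y z -> vl_le (vl_join x y) z
}.

Section VL.
Variables (R : realType) (X : vector_lattice R).

Definition vl_meet (x y : X) : X := - @vl_join _ X (- x) (- y).
Definition vl_abs (x : X) : X := @vl_join _ X x (- x).

Definition archimedean_vl : Prop :=
  forall x y : X, @vl_le _ X 0 x -> @vl_le _ X 0 y ->
    (forall n : nat, @vl_le _ X (x *+ n) y) -> x = 0.

Definition disj_compl (A : X -> Prop) : X -> Prop :=
  fun x => forall a, A a -> vl_meet (vl_abs x) (vl_abs a) = 0.

Definition bidisj_single (a : X) : X -> Prop :=
  disj_compl (disj_compl (fun z => z = a)).

Definition dlhd (a b : X) : Prop :=
  forall z, bidisj_single a z -> bidisj_single b z.
End VL.

Definition disjointness_preserving (R : realType) (X Y : vector_lattice R)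
  (S : X -> Y) : Prop :=
  forall x1 x2 : X, vl_meet (vl_abs x1) (vl_abs x2) = 0 ->
    vl_meet (vl_abs (S x1)) (vl_abs (S x2)) = 0.

Definition condition_beta (R : realType) (X Y : vector_lattice R)
  (S : X -> Y) : Prop :=
  forall a b : X, dlhd a b -> dlhd (S a) (S b).

From HB Require Import structures.
From mathcomp Require Import all_boot all_order all_algebra.
From mathcomp Require Import reals.

(* If S preserves disjointness and so does its inverse U, then U pulls the
   disjoint complement {S a}^d back into {a}^d, so S pushes {a}^dd into
   {S a}^dd.  Applying this to S and then to U shows that S preserves the
   inclusions {a}^dd ⊆ {b}^dd. *)

Set Implicit Arguments. Unset Strict Implicit. Unset Printing Implicit Defensive.
Local Open Scope ring_scope.

Lemma disj_compl1 (R : realType) (V : vector_lattice R) (a w : V) :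
  disj_compl (fun z => z = a) w <-> vl_meet (vl_abs w) (vl_abs a) = 0.
Proof. by split=> [/(_ a erefl) | wa _ ->]. Qed.

Section DisjointnessIsomorphism.
Variables (R : realType) (X Y : vector_lattice R).
Variables (S : X -> Y) (U : Y -> X).
Hypotheses (SK : cancel S U) (US : cancel U S).
Hypotheses (dpS : disjointness_preserving S) (dpU : disjointness_preserving U).

Lemma bidisj_single_map (a z : X) :
  bidisj_single a z -> bidisj_single (S a) (S z).
Proof.
move=> az w /disj_compl1 w_Sa.
have Uw_a : disj_compl (fun x => x = a) (U w).
  by apply/disj_compl1; have := dpU w_Sa; rewrite SK.
by rewrite -[w]US; apply: dpS; exact: az Uw_a.
Qed.

End DisjointnessIsomorphism.

Lemma condition_beta_disj_iso (R : realType) (X Y : vector_lattice R)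
    (S : X -> Y) (U : Y -> X) :
  cancel S U -> cancel U S ->
  disjointness_preserving S -> disjointness_preserving U ->
  condition_beta S.
Proof.
move=> SK US dpS dpU a b ab z /(bidisj_single_map US SK dpU dpS).
by rewrite SK => /ab /(bidisj_single_map SK US dpS dpU); rewrite US.
Qed.

Theorem proposition3p3 (R : realType) (X Y : vector_lattice R)
  (hX : archimedean_vl X) (hY : archimedean_vl Y)
  (T : {linear X -> Y}) (Tinv : Y -> X)
  (hTK : cancel T Tinv) (hKT : cancel Tinv T)
  (hT : disjointness_preserving T) (hTinv : disjointness_preserving Tinv) :
  condition_beta Tinv.
Proof. exact: condition_beta_disj_iso hKT hTK hTinv hT. Qed.
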